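(* Let $\Lambda$ be a finitely aligned left cancellative small category. (1) For $\alpha,\beta\in\Lambda$ with $s(\alpha)=s(\beta)$, we have $\alpha\beta^*\in S_\Lambda^{\mathrm{Iso}}$ if and only if $\alpha\gamma\Lambda\cap\beta\gamma\Lambda\neq\emptyset$ for all $\gamma\in s(\beta)\Lambda$. (2) For $\alpha_i,\beta_i\in\Lambda$, $i=1,\dots,n$, with $s=\bigcup_{i=1}^n\alpha_i\beta_i^*\in S_\Lambda$, we have $s\in S_\Lambda^{\mathrm{Iso}}$ if and only if $\alpha_i\beta_i^*\in S_\Lambda^{\mathrm{Iso}}$ for all $i=1,\dots,n$.
   Context: $\Lambda$ is a small category (objects $\Lambda^0$, range $r$, source $s$), left cancellative, and finitely aligned: for all $\alpha,\beta$, $\alpha\Lambda\cap\beta\Lambda=\bigcup_{f\in F}f\Lambda$ for some finite $F$, where $\alpha\Lambda=\{\alpha\beta:s(\alpha)=r(\beta)\}$. Each $\alpha\in\Lambda$ is the partial bijection $s(\alpha)\Lambda\to\alpha\Lambda$, $\beta\mapsto\alpha\beta$, in the symmetric inverse monoid $\mathcal{I}(\Lambda)$ (composition on largest domain, zero the empty map), with inverse $\alpha^*:\alpha\beta\mapsto\beta$; $S_\Lambda$ is the inverse subsemigroup of $\mathcal{I}(\Lambda)$ generated by these; unions are unions of partial maps. For an inverse semigroup $S$ with natural order ($e\leqslant f$ iff $ef=e$ on idempotents), $S^{\mathrm{Iso}}=\{s\in S:ses^*e\neq0\text{ for every idempotent }0\neq e\leqslant s^*s\}$. *)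

From Stdlib Require Import List.

Set Implicit Arguments.

(* A small category: morphisms Mor, objects Ob, range r, source s,
   identities, and a composition comp a b (= a b, "first b then a" as
   functions) which is meaningful when src a = rng b. *)
Record SmallCat := {
  Ob : Type;
  Mor : Type;
  rng : Mor -> Ob;
  src : Mor -> Ob;
  idm : Ob -> Mor;
  comp : Mor -> Mor -> Mor;
  rng_idm : forall v, rng (idm v) = v;
  src_idm : forall v, src (idm v) = v;
  rng_comp : forall a b, src a = rng b -> rng (comp a b) = rng a;
  src_comp : forall a b, src a = rng b -> src (comp a b) = src b;
  comp_idl : forall a, comp (idm (rng a)) a = a;
  comp_idr : forall a, comp a (idm (src a)) = a;
  comp_assoc : forall a b c, src a = rng b -> src b = rng c ->
     comp a (comp b c) = comp (comp a b) c
}.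

Arguments rng {s}.
Arguments src {s}.
Arguments idm {s}.
Arguments comp {s}.

Section Cat.
Variable C : SmallCat.

Definition rightIdeal (a : Mor C) : Mor C -> Prop :=
  fun x => exists b, src a = rng b /\ x = comp a b.

Definition left_cancellative : Prop :=
  forall a b c : Mor C, src a = rng b -> src a = rng c -> comp a b = comp a c -> b = c.

Definition finitely_aligned : Prop :=
  forall a b : Mor C, exists F : list (Mor C),
    forall x, (rightIdeal a x /\ rightIdeal b x) <-> exists f, In f F /\ rightIdeal f x.

(* Partial maps Lambda -> Lambda, represented by their graphs: R x y means x |-> y. *)
Definition pmap := Mor C -> Mor C -> Prop.

Definition peq (f g : pmap) : Prop := forall x y, f x y <-> g x y.

Definition pmul (f g : pmap) : pmap := fun x z => exists y, g x y /\ f y z.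

Definition pinv (f : pmap) : pmap := fun x y => f y x.

Definition pzero : pmap := fun _ _ => False.

Definition pnonzero (f : pmap) : Prop := exists x y, f x y.

Definition punion (f g : pmap) : pmap := fun x y => f x y \/ g x y.

Definition pgen (a : Mor C) : pmap := fun x y => src a = rng x /\ y = comp a x.

Definition pab (a b : Mor C) : pmap := pmul (pgen a) (pinv (pgen b)).

(* The inverse subsemigroup generated by the alpha's: the subsemigroup
   generated by the alpha's and their inverses alpha^*. *)
Inductive SLgen : pmap -> Prop :=
  | SLgen_gen : forall a, SLgen (pgen a)
  | SLgen_inv : forall a, SLgen (pinv (pgen a))
  | SLgen_mul : forall f g, SLgen f -> SLgen g -> SLgen (pmul f g).

Definition inSL (f : pmap) : Prop := exists g, SLgen g /\ peq f g.

Definition pidempotent (e : pmap) : Prop := peq (pmul e e) e.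

Definition ple (e f : pmap) : Prop := peq (pmul e f) e.

Definition inSLIso (s : pmap) : Prop :=
  inSL s /\
  forall e, inSL e -> pidempotent e -> pnonzero e -> ple e (pmul (pinv s) s) ->
     pnonzero (pmul (pmul (pmul s e) (pinv s)) e).

Fixpoint bigunion (n : nat) (a b : nat -> Mor C) : pmap :=
  match n with
  | O => pzero
  | S m => punion (bigunion m a b) (pab (a m) (b m))
  end.

End Cat.

Arguments rightIdeal {C}.
Arguments pgen {C}.
Arguments pab {C}.
Arguments inSL {C}.
Arguments inSLIso {C}.
Arguments bigunion {C}.
Arguments pmul {C}.
Arguments pinv {C}.
Arguments peq {C}.
Arguments pnonzero {C}.
Arguments ple {C}.
Arguments pidempotent {C}.
Arguments punion {C}.
Arguments pzero {C}.


(* Every element of S_Λ is a partial bijection of Λ that commutes with right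
   multiplication, so its idempotents are identities on right-closed subsets
   E of Λ.  For such an s the defining condition of S^Iso reads: every
   nonempty such E inside the domain of s contains some w with s w ∈ E.
   For s = αβ^* the sets E = βγΛ give the forward implication of (1);
   conversely every such E contains some βγ, hence βγδ whenever
   αγδ ∈ βγΛ, and s maps βγδ to αγδ ∈ E.  For (2), s agrees with each
   αᵢβᵢ^* on the domain of the latter, and any E can be cut down to the
   domain of one αᵢβᵢ^*. *)

Section PartialMaps.
Context {C : SmallCat}.
Implicit Types (f e s : pmap C) (a b x y z w : Mor C).

Definition pfunctional f := forall x y y', f x y -> f x y' -> y = y'.
Definition pinjective f := pfunctional (pinv f).
Definition pdom f x := exists y, f x y.
Definition partial_identity e := forall x y, e x y -> x = y.

Lemma partial_identity_idempotent e : partial_identity e -> pidempotent e.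
Proof.
  intros He x z; split.
  - intros [y [Hxy Hyz]]. now rewrite (He _ _ Hxy).
  - intros Hxz. pose proof (He _ _ Hxz) as <-. now exists x.
Qed.

Lemma idempotent_partial_identity {e} :
  pfunctional e -> pinjective e -> pidempotent e -> partial_identity e.
Proof.
  intros Fe Ie Pe x y Hxy.
  destruct (proj2 (Pe x y) Hxy) as [m [Hxm Hmy]].
  pose proof (Fe _ _ _ Hxm Hxy) as ->.
  exact (Ie _ _ _ Hxy Hmy).
Qed.

Lemma pmul_inv_diag_iff e s x z : pinjective s ->
  pmul e (pmul (pinv s) s) x z <-> pdom s x /\ e x z.
Proof.
  intros Is; split.
  - intros [y [[u [Hxu Hyu]] Hyz]].
    pose proof (Is _ _ _ Hxu Hyu) as <-. split; [now exists u | exact Hyz].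
  - intros [[u Hxu] Hxz]. exists x. split; [now exists u | exact Hxz].
Qed.

Lemma ple_inv_diag_iff e s : pinjective s ->
  ple e (pmul (pinv s) s) <-> forall x y, e x y -> pdom s x.
Proof.
  intros Is; split.
  - intros Hle x y Hxy. now apply (pmul_inv_diag_iff e s x y Is), Hle.
  - intros Hdom x y. rewrite (pmul_inv_diag_iff e s x y Is).
    split; [tauto | intros Hxy; split; [exact (Hdom _ _ Hxy) | exact Hxy]].
Qed.

Lemma conj_nonzero_iff s {e} : partial_identity e ->
  pnonzero (pmul (pmul (pmul s e) (pinv s)) e) <->
  exists w y, s w y /\ e w w /\ e y y.
Proof.
  intros He; split.
  - intros [x [z [y1 [Hxy1 [y2 [Hy2y1 [y3 [Hy2y3 _]]]]]]]].
    pose proof (He _ _ Hxy1) as <-. pose proof (He _ _ Hy2y3) as <-.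
    now exists y2, x.
  - intros [w [y [Hwy [Hw Hy]]]].
    exists y, y, y. split; [exact Hy|]. exists w. split; [exact Hwy|].
    exists w. now split.
Qed.

Lemma rightIdeal_comp {a g} x : src a = rng g ->
  rightIdeal (comp a g) x <-> exists m, src g = rng m /\ x = comp a (comp g m).
Proof.
  intros Hag. unfold rightIdeal. rewrite (src_comp _ _ _ Hag); split.
  - intros [m [Hgm ->]]. exists m. split; [exact Hgm|].
    symmetry. now apply comp_assoc.
  - intros [m [Hgm ->]]. exists m. split; [exact Hgm|]. now apply comp_assoc.
Qed.

Lemma pab_diag_iff c x y : pab c c x y <-> x = y /\ rightIdeal c x.
Proof.
  split.
  - intros [m [[Hcm ->] [_ ->]]]. split; [reflexivity|]. now exists m.
  - intros [<- [m [Hcm ->]]]. exists m. now repeat split.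
Qed.

Lemma inSL_peq f g : peq f g -> inSL g -> inSL f.
Proof.
  intros Hfg [h [Hh Hgh]]. exists h. split; [exact Hh|].
  intros x y. rewrite (Hfg x y). apply Hgh.
Qed.

Lemma inSL_pmul f g : inSL f -> inSL g -> inSL (pmul f g).
Proof.
  intros [f' [Hf Pf]] [g' [Hg Pg]]. exists (pmul f' g'). split; [now constructor|].
  intros x z; split; intros [y [Hxy Hyz]]; exists y;
    split; first [apply Pf | apply Pg]; assumption.
Qed.

Lemma inSL_pinv f : inSL f -> inSL (pinv f).
Proof.
  intros [g [Hg Hfg]].
  apply inSL_peq with (pinv g); [intros x y; apply Hfg|].
  clear f Hfg. induction Hg as [a|a|f g _ IHf _ IHg].
  - exists (pinv (pgen a)). split; [constructor | intros x y; reflexivity].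
  - exists (pgen a). split; [constructor | intros x y; reflexivity].
  - apply inSL_peq with (pmul (pinv g) (pinv f)); [|now apply inSL_pmul].
    intros x z; split; intros [y [Hxy Hyz]]; now exists y.
Qed.

Lemma inSL_pab a b : inSL (pab a b).
Proof.
  exists (pab a b). split; [repeat constructor | intros x y; reflexivity].
Qed.

Record equivariant_pbij f : Prop := {
  epb_functional : pfunctional f;
  epb_injective : pinjective f;
  epb_src : forall x y, f x y -> src x = src y;
  epb_comp : forall x y d, f x y -> src x = rng d -> f (comp x d) (comp y d)
}.

Lemma equivariant_pbij_pinv f : equivariant_pbij f -> equivariant_pbij (pinv f).
Proof.
  intros [Ff If Sf Ef]. split.
  - exact If.
  - exact Ff.
  - intros x y Hyx. symmetry. exact (Sf _ _ Hyx).
  - intros x y d Hyx Hxd. apply Ef; [exact Hyx|]. now rewrite (Sf _ _ Hyx).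
Qed.

Lemma equivariant_pbij_pmul f g :
  equivariant_pbij f -> equivariant_pbij g -> equivariant_pbij (pmul f g).
Proof.
  intros [Ff If Sf Ef] [Fg Ig Sg Eg]. split.
  - intros x z z' [y [Hxy Hyz]] [y' [Hxy' Hy'z']].
    pose proof (Fg _ _ _ Hxy Hxy') as <-. exact (Ff _ _ _ Hyz Hy'z').
  - intros z x x' [y [Hxy Hyz]] [y' [Hx'y' Hy'z]].
    pose proof (If _ _ _ Hyz Hy'z) as <-. exact (Ig _ _ _ Hxy Hx'y').
  - intros x z [y [Hxy Hyz]]. rewrite (Sg _ _ Hxy). exact (Sf _ _ Hyz).
  - intros x z d [y [Hxy Hyz]] Hxd. exists (comp y d). split.
    + exact (Eg _ _ _ Hxy Hxd).
    + apply Ef; [exact Hyz|]. now rewrite <- (Sg _ _ Hxy).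
Qed.

Lemma equivariant_pbij_peq f g : peq f g -> equivariant_pbij g -> equivariant_pbij f.
Proof.
  intros Hfg [Fg Ig Sg Eg]. split; intros x y.
  - intros y' Hxy Hxy'. apply Hfg in Hxy, Hxy'. exact (Fg _ _ _ Hxy Hxy').
  - intros y' Hyx Hy'x. apply Hfg in Hyx, Hy'x. exact (Ig _ _ _ Hyx Hy'x).
  - intros Hxy. exact (Sg _ _ (proj1 (Hfg x y) Hxy)).
  - intros d Hxy Hxd. apply Hfg, Eg; [apply Hfg, Hxy | exact Hxd].
Qed.

Lemma fixed_rightIdeal {e x y} :
  equivariant_pbij e -> e x x -> rightIdeal x y -> e y y.
Proof. intros [_ _ _ Ee] Hx [d [Hxd ->]]. exact (Ee _ _ _ Hx Hxd). Qed.

Lemma bigunion_iff n (a b : nat -> Mor C) x y :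
  bigunion n a b x y <-> exists i, (i < n)%nat /\ pab (a i) (b i) x y.
Proof.
  induction n as [|n IHn]; simpl; unfold punion, pzero.
  - split; [tauto|]. intros [i [Hi _]]. inversion Hi.
  - rewrite IHn. split.
    + intros [[i [Hi H]]|H]; eauto.
    + intros [i [Hi H]]. inversion Hi; subst; eauto.
Qed.

End PartialMaps.

Section LeftCancellative.
Context {C : SmallCat}.
Hypothesis lcC : left_cancellative C.
Implicit Types (f e s : pmap C) (a b g x y : Mor C).

Lemma equivariant_pbij_pgen a : equivariant_pbij (pgen a).
Proof.
  split.
  - intros x y y' [_ ->] [_ ->]. reflexivity.
  - intros y x x' [Hax ->] [Hax' Hy]. exact (lcC _ _ _ Hax Hax' Hy).
  - intros x y [Hax ->]. symmetry. now apply src_comp.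
  - intros x y d [Hax ->] Hxd. split.
    + now rewrite rng_comp.
    + symmetry. now apply comp_assoc.
Qed.

Lemma inSL_equivariant_pbij {f} : inSL f -> equivariant_pbij f.
Proof.
  intros [g [Hg Hfg]]. apply (equivariant_pbij_peq _ _ Hfg). clear f Hfg.
  induction Hg.
  - apply equivariant_pbij_pgen.
  - apply equivariant_pbij_pinv, equivariant_pbij_pgen.
  - apply equivariant_pbij_pmul; assumption.
Qed.

Lemma inSL_idempotent_partial_identity {e} :
  inSL e -> pidempotent e -> partial_identity e.
Proof.
  intros He. destruct (inSL_equivariant_pbij He) as [Fe Ie _ _].
  exact (idempotent_partial_identity Fe Ie).
Qed.

Definition iso_condition s := forall e, inSL e -> pidempotent e -> pnonzero e ->
  (forall x y, e x y -> pdom s x) -> exists w y, s w y /\ e w w /\ e y y.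

Lemma inSLIso_iff {s} : pinjective s -> inSLIso s <-> inSL s /\ iso_condition s.
Proof.
  intros Is. unfold inSLIso, iso_condition.
  split; intros [Hs Iso]; split; try exact Hs; intros e He Pe Ne Hdom;
    pose proof (inSL_idempotent_partial_identity He Pe) as Ie;
    apply (conj_nonzero_iff s Ie), Iso; try assumption;
    now apply ple_inv_diag_iff.
Qed.

Lemma iso_condition_pab_meet a b g : src a = src b -> rng g = src b ->
  iso_condition (pab a b) ->
  exists x, rightIdeal (comp a g) x /\ rightIdeal (comp b g) x.
Proof.
  intros Hab Hgb Iso.
  assert (Hbg : src b = rng g) by congruence.
  assert (Hag : src a = rng g) by congruence.
  destruct (Iso (pab (comp b g) (comp b g))) as [w [y [Hwy [Hw Hy]]]].
  - apply inSL_pab.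
  - apply partial_identity_idempotent. intros x y [Hxy _]%pab_diag_iff. exact Hxy.
  - exists (comp b g), (comp b g). apply pab_diag_iff. split; [reflexivity|].
    exists (idm (src (comp b g))). now rewrite rng_idm, comp_idr.
  - intros x y [_ Hx]%pab_diag_iff.
    apply (rightIdeal_comp _ Hbg) in Hx as [m [Hgm ->]].
    assert (Hr : rng (comp g m) = rng g) by now apply rng_comp.
    exists (comp a (comp g m)), (comp g m). repeat split; congruence.
  - apply pab_diag_iff in Hw as [_ Hw], Hy as [_ Hy].
    apply (rightIdeal_comp _ Hbg) in Hw as [m [Hgm ->]].
    destruct Hwy as [z [[Hbz Hw] [_ ->]]].
    assert (Hz : comp g m = z).
    { apply (lcC b); [| exact Hbz | exact Hw]. now rewrite rng_comp. }
    exists (comp a z). split; [|exact Hy].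
    apply (rightIdeal_comp _ Hag). exists m. now rewrite Hz.
Qed.

Lemma meet_iso_condition_pab a b : src a = src b ->
  (forall g, rng g = src b ->
    exists x, rightIdeal (comp a g) x /\ rightIdeal (comp b g) x) ->
  iso_condition (pab a b).
Proof.
  intros Hab Hmeet e He Pe [x0 [y0 H0]] Hdom.
  pose proof (inSL_idempotent_partial_identity He Pe _ _ H0) as <-.
  destruct (Hdom _ _ H0) as [u [z [[Hbz ->] _]]].
  destruct (Hmeet z (eq_sym Hbz)) as [x [Hax Hbx]].
  pose proof Hax as Hax'.
  apply (rightIdeal_comp _ (eq_trans Hab Hbz)) in Hax' as [d [Hzd ->]].
  assert (Hr : rng (comp z d) = rng z) by now apply rng_comp.
  exists (comp b (comp z d)), (comp a (comp z d)). repeat split.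
  - exists (comp z d). repeat split; congruence.
  - apply (fixed_rightIdeal (inSL_equivariant_pbij He) H0).
    apply (rightIdeal_comp _ Hbz). now exists d.
  - exact (fixed_rightIdeal (inSL_equivariant_pbij He) H0 Hbx).
Qed.

Lemma inSLIso_pab_iff a b : src a = src b ->
  inSLIso (pab a b) <->
  forall g, rng g = src b ->
    exists x, rightIdeal (comp a g) x /\ rightIdeal (comp b g) x.
Proof.
  intros Hab. destruct (inSL_equivariant_pbij (inSL_pab a b)) as [_ Is _ _].
  rewrite (inSLIso_iff Is). split.
  - intros [_ Iso] g Hgb. exact (iso_condition_pab_meet a b g Hab Hgb Iso).
  - intros Hmeet. split; [apply inSL_pab | exact (meet_iso_condition_pab a b Hab Hmeet)].
Qed.

Section Union.
Variables (n : nat) (a b : nat -> Mor C).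
Hypothesis union_inSL : inSL (bigunion n a b).

Lemma iso_condition_bigunion_pab i : (i < n)%nat ->
  iso_condition (bigunion n a b) -> iso_condition (pab (a i) (b i)).
Proof.
  intros Hi Iso e He Pe Ne Hdom.
  destruct (inSL_equivariant_pbij union_inSL) as [Fs _ _ _].
  destruct (Iso e He Pe Ne) as [w [y [Hwy [Hw Hy]]]].
  - intros x y' Hxy'. destruct (Hdom _ _ Hxy') as [u Hu].
    exists u. apply bigunion_iff. eauto.
  - destruct (Hdom _ _ Hw) as [u Hwu].
    assert (u = y) by (apply (Fs w); [apply bigunion_iff; eauto | exact Hwy]).
    subst u. eauto.
Qed.

Lemma iso_condition_pab_bigunion :
  (forall i, (i < n)%nat -> iso_condition (pab (a i) (b i))) ->
  iso_condition (bigunion n a b).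
Proof.
  intros Hall e He Pe [x0 [y0 H0]] Hdom.
  destruct (Hdom _ _ H0) as [u Hu]. apply bigunion_iff in Hu as [j [Hj Hju]].
  set (sj := pab (a j) (b j)) in *.
  destruct (inSL_equivariant_pbij (inSL_pab (a j) (b j))) as [_ Isj _ _].
  set (ej := pmul e (pmul (pinv sj) sj)).
  assert (Hej : forall x y, ej x y <-> pdom sj x /\ e x y)
    by (intros x y; now apply pmul_inv_diag_iff).
  assert (Iej : partial_identity ej)
    by (intros x y [_ Hxy]%Hej; exact (inSL_idempotent_partial_identity He Pe _ _ Hxy)).
  destruct (Hall j Hj ej) as [w [y [Hwy [[_ Hw]%Hej [_ Hy]%Hej]]]].
  - apply inSL_pmul; [exact He|]. apply inSL_pmul; [apply inSL_pinv|]; apply inSL_pab.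
  - now apply partial_identity_idempotent.
  - exists x0, y0. apply Hej. split; [now exists u | exact H0].
  - intros x y [Hx _]%Hej. exact Hx.
  - exists w, y. split; [apply bigunion_iff; eauto | now split].
Qed.

Lemma inSLIso_bigunion_iff :
  inSLIso (bigunion n a b) <-> forall i, (i < n)%nat -> inSLIso (pab (a i) (b i)).
Proof.
  destruct (inSL_equivariant_pbij union_inSL) as [_ Is _ _].
  assert (Isi : forall i, pinjective (pab (a i) (b i)))
    by (intro i; apply (inSL_equivariant_pbij (inSL_pab (a i) (b i)))).
  rewrite (inSLIso_iff Is). split.
  - intros [_ Iso] i Hi. apply (inSLIso_iff (Isi i)).
    split; [apply inSL_pab | exact (iso_condition_bigunion_pab i Hi Iso)].
  - intros Hall. split; [exact union_inSL|]. apply iso_condition_pab_bigunion.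
    intros i Hi. exact (proj2 (proj1 (inSLIso_iff (Isi i)) (Hall i Hi))).
Qed.

End Union.

End LeftCancellative.

Theorem lemma4p3 (C : SmallCat) (Hlc : left_cancellative C) (Hfa : finitely_aligned C) :
  (forall a b : Mor C, src a = src b ->
     (inSLIso (pab a b) <->
      forall g : Mor C, rng g = src b ->
        exists x, rightIdeal (comp a g) x /\ rightIdeal (comp b g) x))
  /\
  (forall (n : nat) (a b : nat -> Mor C),
     inSL (bigunion n a b) ->
     (inSLIso (bigunion n a b) <-> forall i, (i < n)%nat -> inSLIso (pab (a i) (b i)))).
Proof.
  split.
  - intros a b. exact (inSLIso_pab_iff Hlc a b).
  - intros n a b. exact (inSLIso_bigunion_iff Hlc n a b).
Qed.
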